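(* Consider the censored delayed-feedback bandit model with threshold $m\ge1$ (see context) in which the sequence of pulled arms $(A_s)_{s\ge1}$ is fixed beforehand (deterministic, independent of all realizations). Let $k\in\{1,\dots,K\}$ and $t>0$ with $\tilde N_k(t)>0$. Then for any $\delta>0$, \[ \mathbb{P}\Big(\{\hat\theta_k(t)<\theta_k\}\cap\{\tilde N_k(t)\,d_{\mathrm{Pois}}(\hat\theta_k(t),\theta_k)>\delta\}\Big)<e^{-\delta}. \]
   Context: Censored delayed-feedback bandit model: $K$ arms with conversion rates $\theta_1,\dots,\theta_K\in[0,1]$; a delay distribution on $\mathbb{N}$ with CDF $\tau_d=\mathbb{P}(D\le d)$; threshold $m$. Pulling arm $A_s$ at round $s$ triggers independent $C_s\sim\mathrm{Bernoulli}(\theta_{A_s})$ and $D_s\sim\tau$ (independent across rounds); a conversion of the pull at round $s$ is observed at time $s+D_s$ only if $D_s\le m$. Define $\tilde N_k(t)=\tau_m\sum_{s=1}^{t-m}\mathbf{1}\{A_s=k\}+\sum_{s=t-m+1}^{t-1}\mathbf{1}\{A_s=k\}\tau_{t-s}$, $S_k(t)=\sum_{s=1}^{t-1}\mathbf{1}\{A_s=k\}C_s\mathbf{1}\{D_s\le\min(t-s,m)\}$ (the number of conversions of previous pulls of $k$ observed by time $t$), and $\hat\theta_k(t)=S_k(t)/\tilde N_k(t)$. $d_{\mathrm{Pois}}(p,q)=p\log(p/q)+q-p$ is the Poisson Kullback–Leibler divergence. *)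

From HB Require Import structures.
From mathcomp Require Import all_boot all_order all_algebra.
From mathcomp Require Import all_classical all_reals all_analysis.
Set Implicit Arguments. Unset Strict Implicit. Unset Printing Implicit Defensive.
Import Order.TTheory GRing.Theory Num.Theory.
Local Open Scope ring_scope.

Definition tauCDF (R : realType) (p : nat -> R) (d : nat) : R :=
  \sum_(0 <= i < d.+1) p i.

Definition Ntilde (R : realType) (K : nat) (A : nat -> 'I_K) (p : nat -> R)
  (m : nat) (k : 'I_K) (t : nat) : R :=
  tauCDF p m * (\sum_(1 <= s < (t - m).+1) (A s == k)%:R)
  + \sum_((t - m).+1 <= s < t) (A s == k)%:R * tauCDF p (t - s).

Definition Sk (R : realType) (T : Type) (K : nat) (A : nat -> 'I_K)
  (C : nat -> T -> bool) (D : nat -> T -> nat) (m : nat) (k : 'I_K) (t : nat)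
  (w : T) : R :=
  \sum_(1 <= s < t) ((A s == k) && C s w && (D s w <= minn (t - s) m)%N)%:R.

Definition thetahat (R : realType) (T : Type) (K : nat) (A : nat -> 'I_K)
  (p : nat -> R) (C : nat -> T -> bool) (D : nat -> T -> nat) (m : nat)
  (k : 'I_K) (t : nat) (w : T) : R :=
  Sk R A C D m k t w / Ntilde A p m k t.

Definition dPois (R : realType) (x q : R) : R := x * ln (x / q) + q - x.

Definition bernp (R : realType) (th : R) (c : bool) : R :=
  if c then th else 1 - th.

From HB Require Import structures.
From mathcomp Require Import all_boot all_order all_algebra.
From mathcomp Require Import all_classical all_reals all_analysis.
From mathcomp Require Import ring lra zify.

(* Only the pulls [s] of arm [k] before [t] contribute to [S_k(t)], and such a
   pull contributes iff [C_s] holds and [D_s <= min(t - s, m)], an event of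
   probability [theta_k tau_(min(t - s, m))].  The product formula for the atoms
   [{C_s = c, D_s = e}] extends to these events by finite additivity and to
   their complements by subtraction, so [S_k(t)] is a sum of independent
   Bernoulli variables with mean [mu = theta_k Ntilde_k(t)].  If [y0] is the
   largest value of [S_k(t)] on the event considered, that event lies in
   [{S_k(t) <= y0}], and the Chernoff bound with [z = y0 / mu <= 1] gives
   [P(S <= y0) <= E[z^S] / z^y0 <= exp(mu (z - 1) - y0 ln z)
    = exp(- d_Pois(y0, mu)) = exp(- Ntilde d_Pois(y0 / Ntilde, theta_k))],
   which is smaller than [exp(- delta)] by the choice of [y0]. *)

Set Implicit Arguments.
Unset Strict Implicit.
Unset Printing Implicit Defensive.
Import Order.TTheory GRing.Theory Num.Theory.
Local Open Scope classical_set_scope.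
Local Open Scope ring_scope.

Section finite_preimage.
Context d (T : measurableType d) (R : realType) (mu : {measure set T -> \bar R}).

Lemma measureI_preimage_seq (V : choiceType) (f : T -> V) (G : set T) (U : seq V) :
  measurable G -> (forall v, measurable (f @^-1` [set v])) -> uniq U ->
  mu (G `&` f @^-1` [set` U]) = (\sum_(v <- U) mu (G `&` f @^-1` [set v]))%E.
Proof.
move=> mG mf uU.
have -> : G `&` f @^-1` [set` U] = \bigcup_(v in [set` U]) (G `&` f @^-1` [set v]).
  by apply/seteqP; split=> [x [Gx Ux]|x [v Uv [Gx /= fxv]]]; [exists (f x)|rewrite /= fxv].
rewrite measure_fin_bigcup.
- by rewrite -fsbig_seq.
- exact: finite_seq.
- apply/trivIsetP => u v _ _ uv; apply/seteqP; split=> x //= [[_ fxu] [_ fxv]].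
  by rewrite -fxu -fxv eqxx in uv.
- by move=> v _; apply: measurableI.
Qed.

End finite_preimage.

Section product_rule_finite_sets.
Context d (T : measurableType d) (R : realType) (mu : {measure set T -> \bar R}).
Context (I : eqType) (V : choiceType) (ok : pred I) (Z : I -> T -> V) (w : I -> V -> R).
Hypothesis mZ : forall i v, measurable (Z i @^-1` [set v]).
Hypothesis mu_atoms : forall l : seq (I * V), uniq (unzip1 l) -> all ok (unzip1 l) ->
  mu (\big[setI/setT]_(x <- l) Z x.1 @^-1` [set x.2]) = (\prod_(x <- l) w x.1 x.2)%:E.

Lemma measurable_preimage_seq i (U : seq V) : measurable (Z i @^-1` [set` U]).
Proof.
have -> : Z i @^-1` [set` U] = \bigcup_(v in [set` U]) Z i @^-1` [set v].
  by apply/seteqP; split=> [x Ux|x [v Uv /= ->]] //; exists (Z i x).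
by apply: fin_bigcup_measurable => //; exact: finite_seq.
Qed.

Lemma mu_bigsetI_atoms_preimage_seq (U : I -> seq V) (l0 : seq (I * V)) (l : seq I) :
  (forall i, uniq (U i)) -> uniq (unzip1 l0 ++ l) -> all ok (unzip1 l0 ++ l) ->
  mu (\big[setI/setT]_(x <- l0) Z x.1 @^-1` [set x.2] `&`
      \big[setI/setT]_(i <- l) Z i @^-1` [set` U i]) =
  (\prod_(x <- l0) w x.1 x.2 * \prod_(i <- l) \sum_(v <- U i) w i v)%:E.
Proof.
move=> uU; elim: l l0 => [|i l IH] l0 ul okl.
  by rewrite !big_nil setIT mulr1 mu_atoms // -[unzip1 l0]cats0.
rewrite big_cons setIA setIAC measureI_preimage_seq //; last first.
  by apply: measurableI; apply: bigsetI_measurable => j _;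
    [exact: mZ|exact: measurable_preimage_seq].
have ul' : uniq (unzip1 l0 ++ l) by move: ul; rewrite -cat1s uniq_catCA => /andP[].
have okl' : all ok (unzip1 l0 ++ l) by move: okl; rewrite !all_cat /= => /and3P[-> _ ->].
transitivity (\sum_(v <- U i)
  ((w i v * \prod_(x <- l0) w x.1 x.2) * \prod_(j <- l) \sum_(u <- U j) w j u)%:E)%E.
  apply: eq_bigr => v _; rewrite setIAC [_ `&` Z i @^-1` _]setIC.
  have -> : Z i @^-1` [set v] `&` \big[setI/setT]_(x <- l0) Z x.1 @^-1` [set x.2] =
            \big[setI/setT]_(x <- (i, v) :: l0) Z x.1 @^-1` [set x.2] by rewrite big_cons.
  rewrite IH ?big_cons //.
  - by rewrite -cat1s uniq_catCA in ul.
  - by move: okl; rewrite !all_cat /= => /and3P[-> -> ->].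
by rewrite sumEFin big_cons -!big_distrl /= -mulrA mulrCA mulrA.
Qed.

Lemma mu_bigsetI_preimage_seq (U : I -> seq V) (l : seq I) :
  (forall i, uniq (U i)) -> uniq l -> all ok l ->
  mu (\big[setI/setT]_(i <- l) Z i @^-1` [set` U i]) =
  (\prod_(i <- l) \sum_(v <- U i) w i v)%:E.
Proof.
move=> uU ul okl.
by have := @mu_bigsetI_atoms_preimage_seq U [::] l uU ul okl; rewrite !big_nil setTI mul1r.
Qed.

End product_rule_finite_sets.

Lemma preimage_false (T : Type) (X : T -> bool) :
  X @^-1` [set false] = ~` (X @^-1` [set true]).
Proof. by apply/seteqP; split=> x /=; case: (X x). Qed.

Section product_rule_complements.
Context d (T : measurableType d) (R : realType) (mu : {finite_measure set T -> \bar R}).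
Context (I : eqType) (ok : pred I) (X : I -> T -> bool) (r : I -> R).
Hypothesis mX : forall i, measurable (X i @^-1` [set true]).
Hypothesis mu_bigsetI_true : forall l : seq I, uniq l -> all ok l ->
  mu (\big[setI/setT]_(i <- l) X i @^-1` [set true]) = (\prod_(i <- l) r i)%:E.

Lemma mu_bigsetI_true_preimage_bool (l0 : seq I) (l : seq (I * bool)) :
  uniq (l0 ++ unzip1 l) -> all ok (l0 ++ unzip1 l) ->
  mu (\big[setI/setT]_(i <- l0) X i @^-1` [set true] `&`
      \big[setI/setT]_(x <- l) X x.1 @^-1` [set x.2]) =
  (\prod_(i <- l0) r i * \prod_(x <- l) bernp (r x.1) x.2)%:E.
Proof.
elim: l l0 => [|[i b] l IH] l0 ul okl.
  by rewrite !big_nil setIT mulr1 mu_bigsetI_true // -[l0]cats0.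
rewrite /= in ul okl.
have ul' : uniq (l0 ++ unzip1 l) by move: ul; rewrite -cat1s uniq_catCA => /andP[].
have okl' : all ok (l0 ++ unzip1 l) by move: okl; rewrite !all_cat /= => /and3P[-> _ ->].
have uil : uniq ((i :: l0) ++ unzip1 l) by rewrite -cat1s uniq_catCA in ul.
have okil : all ok ((i :: l0) ++ unzip1 l).
  by move: okl; rewrite !all_cat /= => /and3P[-> -> ->].
have mbig : measurable (\big[setI/setT]_(j <- l0) X j @^-1` [set true] `&`
    \big[setI/setT]_(x <- l) X x.1 @^-1` [set x.2]).
  apply: measurableI; apply: bigsetI_measurable => j _ //.
  by case: j.2; rewrite ?preimage_false; [|apply: measurableC]; exact: mX.
rewrite big_cons; case: b => /=.
  rewrite setICA setIA.
  have -> : X i @^-1` [set true] `&` \big[setI/setT]_(j <- l0) X j @^-1` [set true] =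
            \big[setI/setT]_(j <- i :: l0) X j @^-1` [set true] by rewrite big_cons.
  by rewrite IH // !big_cons /=; congr (_%:E); ring.
rewrite setIA setIAC preimage_false -setDE measureD //; last first.
  by rewrite ltey_eq fin_num_measure.
rewrite setIAC [_ `&` X i @^-1` _]setIC.
have -> : X i @^-1` [set true] `&` \big[setI/setT]_(j <- l0) X j @^-1` [set true] =
          \big[setI/setT]_(j <- i :: l0) X j @^-1` [set true] by rewrite big_cons.
rewrite (congr2 (fun a b => (a - b)%E) (IH l0 ul' okl') (IH (i :: l0) uil okil)).
by rewrite -EFinB !big_cons /=; congr (_%:E); ring.
Qed.

Lemma mu_bigsetI_preimage_bool (l : seq (I * bool)) :
  uniq (unzip1 l) -> all ok (unzip1 l) ->
  mu (\big[setI/setT]_(x <- l) X x.1 @^-1` [set x.2]) =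
  (\prod_(x <- l) bernp (r x.1) x.2)%:E.
Proof.
move=> ul okl.
by have := @mu_bigsetI_true_preimage_bool [::] l ul okl; rewrite !big_nil setTI mul1r.
Qed.

End product_rule_complements.

Section bernoulli_lower_tail.
Variable R : realType.

Lemma bernp_ge0 (q : R) (c : bool) : 0 <= q <= 1 -> 0 <= bernp q c.
Proof. by case/andP=> q_ge0 q_le1; case: c => /=; lra. Qed.

Lemma bernoulli_pgf n (q : 'I_n -> R) (z : R) :
  \sum_(b : {ffun 'I_n -> bool}) z ^+ (\sum_i b i)%N * \prod_i bernp (q i) (b i) =
  \prod_i (1 + q i * (z - 1)).
Proof.
have pgf1 i : 1 + q i * (z - 1) = \sum_(c : bool) z ^+ c * bernp (q i) c.
  by rewrite big_bool /= expr1 expr0; ring.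
under [RHS]eq_bigr do rewrite pgf1.
rewrite bigA_distr_bigA; apply: eq_bigr => b _.
by rewrite big_split /= (big_morph (fun k => z ^+ k) (exprD z) (expr0 z)).
Qed.

Lemma dPoisZ (c x y : R) : c != 0 -> dPois (c * x) (c * y) = c * dPois x y.
Proof. by move=> c_neq0; rewrite /dPois -mulf_div divff // mul1r; ring. Qed.

Lemma bernoulli_sum_lower_tail n (q : 'I_n -> R) (B : pred {ffun 'I_n -> bool})
    (y0 : nat) :
  (forall i, 0 <= q i <= 1) -> 0 < \sum_i q i -> y0%:R <= \sum_i q i ->
  (forall b, B b -> (\sum_i b i <= y0)%N) ->
  \sum_(b | B b) \prod_i bernp (q i) (b i) <= expR (- dPois y0%:R (\sum_i q i)).
Proof.
move=> q01 mu_gt0 y0_le B_le; set mu := \sum_i q i.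
pose z := y0%:R / mu.
have z_ge0 : 0 <= z by rewrite divr_ge0 // ltW.
have z_le1 : z <= 1 by rewrite ler_pdivrMr // mul1r.
(* For [y0 = 0] this reads [0 ^+ 0 = 1], the junk value [ln 0] being multiplied by 0. *)
have zy0E : z ^+ y0 = expR (y0%:R * ln z).
  have [->|y0_gt0] := posnP y0; first by rewrite expr0 mul0r expR0.
  by rewrite expRM_natl lnK // posrE divr_gt0 // ltr0n.
have zy0_gt0 : 0 < z ^+ y0 by rewrite zy0E expR_gt0.
have prod_ge0 b : 0 <= \prod_i bernp (q i) (b i).
  by apply: prodr_ge0 => i _; apply: bernp_ge0.
have tail_le : \sum_(b | B b) \prod_i bernp (q i) (b i) <=
    (\prod_i (1 + q i * (z - 1))) / z ^+ y0.
  rewrite -bernoulli_pgf mulr_suml [X in _ <= X](bigID B) /= -[X in X <= _]addr0.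
  apply: lerD.
    apply: ler_sum => b /B_le yb_le; rewrite mulrAC ler_peMl //.
    by rewrite ler_pdivlMr // mul1r ler_wiXn2l.
  by apply: sumr_ge0 => b _; rewrite divr_ge0 ?mulr_ge0 ?exprn_ge0 ?(ltW zy0_gt0).
have pgf_le : \prod_i (1 + q i * (z - 1)) <= expR (mu * (z - 1)).
  rewrite mulr_suml expR_sum; apply: ler_prod => i _.
  by have /andP[q_ge0 q_le1] := q01 i; rewrite expR_ge1Dx andbT; nra.
apply: (le_trans tail_le); rewrite ler_pdivrMr //; apply: (le_trans pgf_le).
rewrite zy0E -expRD ler_expR /dPois /z mulrBr mulr1 mulrC divfK ?gt_eqF //.
lra.
Qed.

End bernoulli_lower_tail.

Section censored_delayed_feedback.
Context (R : realType) d (T : measurableType d) (P : probability T R).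
Context (K : nat) (theta : 'I_K -> R) (p : nat -> R) (A : nat -> 'I_K).
Context (C : nat -> T -> bool) (D : nat -> T -> nat).
Hypothesis mCD : forall s c e, measurable [set w | C s w = c /\ D s w = e].
Hypothesis CD_indep :
  forall (n : nat) (s : 'I_n -> nat) (c : 'I_n -> bool) (e : 'I_n -> nat),
  injective s -> (forall i, (0 < s i)%N) ->
  P (\bigcap_(i in [set: 'I_n]) [set w | C (s i) w = c i /\ D (s i) w = e i])
  = (\prod_(i < n) (bernp (theta (A (s i))) (c i) * p (e i)))%:E.

Definition feedback s w := (C s w, D s w).

Lemma feedback_preimage s c e :
  feedback s @^-1` [set (c, e)] = [set w | C s w = c /\ D s w = e].
Proof. by apply/seteqP; split=> w; rewrite /feedback /= => -[-> ->]. Qed.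

Lemma measurable_feedback s u : measurable (feedback s @^-1` [set u]).
Proof. by case: u => c e; rewrite feedback_preimage; exact: mCD. Qed.

Lemma P_feedback_atoms (l : seq (nat * (bool * nat))) :
  uniq (unzip1 l) -> all (fun s => 0 < s)%N (unzip1 l) ->
  P (\big[setI/setT]_(x <- l) feedback x.1 @^-1` [set x.2]) =
  (\prod_(x <- l) (bernp (theta (A x.1)) x.2.1 * p x.2.2))%:E.
Proof.
rewrite /unzip1 => ul l_gt0; pose x0 := (0%N, (false, 0%N)).
have s_inj : injective (fun i : 'I_(size l) => (nth x0 l i).1).
  move=> i j /= eq_ij; apply/ord_inj/eqP.
  rewrite -(nth_uniq 0%N _ _ ul) ?size_map ?ltn_ord //.
  by rewrite !(nth_map x0) ?ltn_ord ?eq_ij.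
have s_gt0 (i : 'I_(size l)) : (0 < (nth x0 l i).1)%N.
  by move/(all_nthP 0%N)/(_ i): l_gt0; rewrite size_map (nth_map x0) //; apply.
rewrite !(big_nth x0) !big_mkord -(CD_indep (fun i => (nth x0 l i).2.1)
  (fun i => (nth x0 l i).2.2) s_inj s_gt0).
congr (P _); rewrite -bigcap_seq; apply/seteqP; split=> w /= w_in i _.
  rewrite -feedback_preimage -surjective_pairing.
  by apply: (w_in i); rewrite /= mem_index_enum.
by rewrite (surjective_pairing (nth x0 l i).2) feedback_preimage; apply: (w_in i).
Qed.

Variables (m : nat) (k : 'I_K) (t : nat).

Definition window s := minn (t - s) m.

Definition observed s w := C s w && (D s w <= window s)%N.

Definition observable s := [seq (true, e) | e <- iota 0 (window s).+1].

Definition obs_rate s := theta (A s) * tauCDF p (window s).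

Lemma observed_preimage s :
  observed s @^-1` [set true] = feedback s @^-1` [set` observable s].
Proof.
apply/seteqP; split=> w /=; rewrite /observed /feedback.
  by case/andP=> -> D_le; apply/mapP; exists (D s w); rewrite // mem_iota ltnS.
by case/mapP=> e; rewrite mem_iota ltnS => e_le [-> ->].
Qed.

Lemma obs_rate_observable s :
  obs_rate s = \sum_(u <- observable s) bernp (theta (A s)) u.1 * p u.2.
Proof. by rewrite big_map -big_distrr /obs_rate /tauCDF /index_iota subn0. Qed.

Lemma measurable_observed s c : measurable (observed s @^-1` [set c]).
Proof.
case: c; rewrite ?preimage_false; [|apply: measurableC]; rewrite observed_preimage;
  exact: (@measurable_preimage_seq _ _ _ _ feedback measurable_feedback).
Qed.

Lemma P_observed (l : seq (nat * bool)) :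
  uniq (unzip1 l) -> all (fun s => 0 < s)%N (unzip1 l) ->
  P (\big[setI/setT]_(x <- l) observed x.1 @^-1` [set x.2]) =
  (\prod_(x <- l) bernp (obs_rate x.1) x.2)%:E.
Proof.
apply: mu_bigsetI_preimage_bool => [s|l' ul' l'_gt0]; first exact: measurable_observed.
under eq_bigr do rewrite observed_preimage.
rewrite (mu_bigsetI_preimage_seq (w := fun s u => bernp (theta (A s)) u.1 * p u.2)
  measurable_feedback P_feedback_atoms) //.
- by congr (_%:E); apply: eq_bigr => s _; rewrite obs_rate_observable.
- by move=> s; rewrite map_inj_uniq ?iota_uniq // => e1 e2 [].
Qed.

Lemma obs_rate_ge0_le1 s : (0 < s)%N -> 0 <= obs_rate s <= 1.
Proof.
move=> s_gt0; have bernp_ge0 c : 0 <= bernp (obs_rate s) c.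
  have := P_observed (l := [:: (s, c)]) isT; rewrite /= s_gt0 !big_seq1 => /(_ isT) Pc.
  by rewrite -lee_fin -Pc measure_ge0.
by have := bernp_ge0 true; have := bernp_ge0 false => /= ? ?; apply/andP; split; lra.
Qed.

Definition pulls := [seq s <- index_iota 1 t | A s == k].

Definition pull (i : 'I_(size pulls)) := tnth (in_tuple pulls) i.

Definition outcome w := [ffun i => observed (pull i) w].

Lemma pull_gt0 i : (0 < pull i)%N.
Proof.
by have := mem_tnth i (in_tuple pulls); rewrite mem_filter mem_index_iota => /and3P[].
Qed.

Lemma outcome_preimage b : outcome @^-1` [set b] =
  \big[setI/setT]_(x <- [seq (pull i, b i) | i <- enum 'I_(size pulls)])
    observed x.1 @^-1` [set x.2].
Proof.
rewrite -bigcap_seq; apply/seteqP; split=> w /=.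
  by move=> <- _ /mapP[i _ ->]; rewrite /= ffunE.
move=> w_in; apply/ffunP => i; rewrite ffunE.
by apply: (w_in (pull i, b i)); apply/mapP; exists i; rewrite ?mem_enum.
Qed.

Lemma measurable_outcome b : measurable (outcome @^-1` [set b]).
Proof.
by rewrite outcome_preimage; apply: bigsetI_measurable => x _; exact: measurable_observed.
Qed.

Lemma P_outcome b :
  P (outcome @^-1` [set b]) = (\prod_i bernp (obs_rate (pull i)) (b i))%:E.
Proof.
have unzip_pulls : unzip1 [seq (pull i, b i) | i <- enum 'I_(size pulls)] = pulls.
  by rewrite /unzip1 -map_comp; exact: map_tnth_enum.
rewrite outcome_preimage P_observed ?unzip_pulls; first by rewrite big_map big_enum.
  exact/filter_uniq/iota_uniq.
by apply/allP => s; rewrite mem_filter mem_index_iota => /and3P[].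
Qed.

Lemma Sk_outcome w : Sk R A C D m k t w = ((\sum_i outcome w i)%N)%:R.
Proof.
transitivity (\sum_(s <- pulls) (observed s w)%:R : R).
  by rewrite /Sk big_filter [RHS]big_mkcond; apply: eq_bigr => s _; case: (A s == k).
by rewrite [LHS]big_tnth natr_sum; apply: eq_bigr => i _; rewrite ffunE.
Qed.

Lemma sum_obs_rate : (0 < t)%N -> (0 < m)%N ->
  \sum_i obs_rate (pull i) = theta k * Ntilde A p m k t.
Proof.
move=> t_gt0 m_gt0.
transitivity (\sum_(s <- pulls) obs_rate s); first by rewrite [RHS]big_tnth.
rewrite big_filter big_mkcond /Ntilde (@big_cat_nat _ _ _ (t - m).+1) //=; last lia.
rewrite mulrDr; congr (_ + _).
  rewrite mulrA big_distrr /=; apply: eq_big_nat => s /andP[s_ge1 s_lt].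
  rewrite /obs_rate /window (_ : minn (t - s) m = m); last lia.
  by case: eqP => [->|_]; rewrite ?mulr1 ?mulr0.
rewrite big_distrr /=; apply: eq_big_nat => s /andP[s_gt s_lt].
rewrite /obs_rate /window (_ : minn (t - s) m = (t - s)%N); last lia.
by case: eqP => [->|_]; rewrite ?mul1r ?mul0r ?mulr0.
Qed.

End censored_delayed_feedback.

Theorem lemma7 (R : realType) (d : measure_display) (T : measurableType d)
  (P : probability T R) (K : nat) (theta : 'I_K -> R) (p : nat -> R)
  (m : nat) (A : nat -> 'I_K) (C : nat -> T -> bool) (D : nat -> T -> nat)
  (k : 'I_K) (t : nat) (delta : R) :
  (forall j, 0 <= theta j <= 1) ->
  (1 <= m)%N ->
  (* the events {C_s = c, D_s = e} are measurable *)
  (forall s c e, measurable [set w | C s w = c /\ D s w = e]) ->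
  (* (C_s, D_s)_{s >= 1} independent, C_s ~ Bernoulli(theta_{A_s}),
     D_s ~ delay law with pmf p, C_s independent of D_s *)
  (forall (n : nat) (s : 'I_n -> nat) (c : 'I_n -> bool) (e : 'I_n -> nat),
     injective s -> (forall i, (0 < s i)%N) ->
     P (\bigcap_(i in [set: 'I_n]) [set w | C (s i) w = c i /\ D (s i) w = e i])
     = (\prod_(i < n) (bernp (theta (A (s i))) (c i) * p (e i)))%:E) ->
  (0 < t)%N ->
  0 < Ntilde A p m k t ->
  0 < delta ->
  (P [set w | (thetahat A p C D m k t w < theta k)%R /\
              (Ntilde A p m k t * dPois (thetahat A p C D m k t w) (theta k) > delta)%R]
   < (expR (- delta))%:E)%E.
Proof.
move=> _ m_gt0 mCD CD_indep t_gt0 N_gt0 _.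
set N := Ntilde A p m k t.
pose bad (b : {ffun 'I_(size (pulls A k t)) -> bool}) :=
  (((\sum_i b i)%N)%:R / N < theta k) &&
  (delta < N * dPois (((\sum_i b i)%N)%:R / N) (theta k)).
have -> : [set w | thetahat A p C D m k t w < theta k /\
                   N * dPois (thetahat A p C D m k t w) (theta k) > delta] =
          setT `&` outcome A C D m k t @^-1` [set` enum bad].
  apply/seteqP; split=> w; rewrite /= mem_enum unfold_in /thetahat Sk_outcome.
    by move=> [lt_theta gt_delta]; split => //; apply/andP.
  by move=> [_ /andP[lt_theta gt_delta]].
rewrite measureI_preimage_seq ?enum_uniq //; last exact: measurable_outcome.
under eq_bigr do rewrite setTI.
rewrite (eq_bigr _ (fun b _ => P_outcome mCD CD_indep m b)).
rewrite sumEFin lte_fin big_enum /=.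
have [b0 bad_b0|no_bad] := pickP bad; last by rewrite big_pred0 // expR_gt0.
have [b1 /andP[b1_lt b1_gt] b1_max] := arg_maxnP
  (fun b : {ffun 'I_(size (pulls A k t)) -> bool} => (\sum_i b i)%N) bad_b0.
have sum_rates := sum_obs_rate theta p A k t_gt0 m_gt0.
rewrite ltr_pdivrMr // in b1_lt.
apply: le_lt_trans (bernoulli_sum_lower_tail _ _ _ b1_max) _.
- by move=> i; apply: (obs_rate_ge0_le1 mCD CD_indep); apply: pull_gt0.
- by rewrite sum_rates; exact: le_lt_trans (ler0n _ _) b1_lt.
- by rewrite sum_rates ltW.
rewrite ltr_expR ltrN2 sum_rates (mulrC (theta k)).
have -> : ((\sum_i b1 i)%N)%:R = N * (((\sum_i b1 i)%N)%:R / N).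
  by rewrite mulrC divfK ?gt_eqF.
by rewrite dPoisZ ?gt_eqF.
Qed.
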